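(* Let $\rho,\lambda,\mu$ be partitions of $n$, write $|\rho|$ for the number of parts of $\rho$, and let $|\lambda|=I$, $|\mu|=J$. Let $m_\rho=m_\rho^\lambda m_\rho^\mu$. Then: (a) $m_{(n-1,1)}=(I-1)(J-1)$; this is the multiplicity attached to $\beta_{(n-1,1)}=1-2/n$. (b) If $m_\rho>0$, then $|\rho|\le\min(I,J)$ and $\rho_1\ge\max(\lambda_1,\mu_1)$. (c) If $\rho=(n-k,k)$ with $1\le k\le\lfloor n/2\rfloor$ and $\lambda=(n-j,j)$, then $m_\rho^\lambda=0$ if $k>j$ and $m_\rho^\lambda=1$ otherwise. (d) If $\rho=(n-k,k)$, $\mu=(\mu_1,\dots,\mu_J)$ and $\mu_1\ge k$, then \[ m_\rho^\mu=\#\Big\{(x_1,\dots,x_{J-1})\in\mathbb{N}^{J-1}:\ \sum_{j=1}^{J-1}x_j=k,\ x_j\le\mu_{j+1}\Big\}=\big|\mathcal{T}_{(k,\,n-\mu_1-k),(\mu_2,\mu_3,\dots,\mu_J)}\big|. \]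
   Context: For partitions $\rho,\lambda$ of $n$, the Kostka number $m_\rho^\lambda$ is the number of semistandard Young tableaux of shape $\rho$ and content $\lambda$: fillings of the Young diagram of $\rho$ with $\lambda_1$ symbols $1$, $\lambda_2$ symbols $2$, etc., with rows weakly increasing and columns strictly increasing. $\beta_\rho=\frac1n+\frac1{n^2}\sum_{j}\left[\rho_j^2-(2j-1)\rho_j\right]$. For sequences $a=(a_1,\dots,a_p)$, $b=(b_1,\dots,b_q)$ of nonnegative integers with equal sums, $\mathcal{T}_{a,b}$ denotes the set of $p\times q$ nonnegative integer tables with row sums $a$ and column sums $b$. Here $\mathbb{N}=\{0,1,2,\dots\}$. *)

From mathcomp Require Import all_boot all_order all_algebra.
Set Implicit Arguments. Unset Strict Implicit. Unset Printing Implicit Defensive.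
Import GRing.Theory Num.Theory.

(* A partition of n: a weakly decreasing sequence of positive integers
   summing to n.  Parts are rho_1 = nth 0 rho 0, rho_2 = nth 0 rho 1, ... *)
Definition is_partition (n : nat) (rho : seq nat) : bool :=
  [&& sorted geq rho, all (fun x => 0 < x) rho & sumn rho == n].

(* The cells (i,j) of the Young diagram of rho (0-indexed row i, column j). *)
Definition cell (rho : seq nat) :=
  {c : 'I_(size rho) * 'I_(head 0 rho) | c.2 < nth 0 rho c.1}.

(* A semistandard filling of shape rho and content lam: the symbols are
   'I_(size lam) (symbol a stands for a+1); rows weakly increase, columns
   strictly increase, and symbol a occurs exactly lam_(a+1) times. *)
Definition is_ssyt (rho lam : seq nat) (f : {ffun cell rho -> 'I_(size lam)}) : bool :=
  [&& [forall c : cell rho, forall c' : cell rho,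
        ((val c).1 == (val c').1) && ((val c).2 <= (val c').2) ==> (f c <= f c')],
      [forall c : cell rho, forall c' : cell rho,
        ((val c).2 == (val c').2) && ((val c).1 < (val c').1) ==> (f c < f c')]
    & [forall a : 'I_(size lam), #|[set c | f c == a]| == nth 0 lam a]].

Definition kostka (rho lam : seq nat) : nat :=
  #|[set f : {ffun cell rho -> 'I_(size lam)} | is_ssyt f]|.

Definition beta (n : nat) (rho : seq nat) : rat :=
  ((n%:R)^-1 + (n%:R ^+ 2)^-1 *
    \sum_(j < size rho) ((nth 0 rho j)%:R ^+ 2 - (2 * j.+1 - 1)%:R * (nth 0 rho j)%:R))%R.

(* |T_{a,b}| : number of (size a) x (size b) tables of naturals with row sums a
   and column sums b.  Entries are necessarily <= sumn a, so they are taken in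
   'I_(sumn a).+1 without loss. *)
Definition num_tables (a b : seq nat) : nat :=
  #|[set M : {ffun 'I_(size a) * 'I_(size b) -> 'I_(sumn a).+1} |
     [forall i : 'I_(size a), \sum_(j < size b) (M (i, j) : nat) == nth 0 a i]
     && [forall j : 'I_(size b), \sum_(i < size a) (M (i, j) : nat) == nth 0 b j]]|.

(* #{x in N^p : sum x = k, x_j <= bound_j}; entries necessarily <= k. *)
Definition num_bounded_comps (p k : nat) (bound : nat -> nat) : nat :=
  #|[set x : {ffun 'I_p -> 'I_k.+1} |
     (\sum_(j < p) (x j : nat) == k) && [forall j : 'I_p, (x j : nat) <= bound j]]|.

(* A semistandard tableau is determined by the number of occurrences of each
   symbol in each row, since rows weakly increase.  In a tableau of shape
   (n-k, k) and content mu with k <= mu_1, all mu_1 >= k smallest symbols lie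
   in the first row, above the whole second row, so column strictness holds
   automatically: such tableaux correspond to the second-row multiplicities
   x_b <= mu_b (b >= 2) with sum k.  This is (d); its second equality takes the
   first-row multiplicities mu_b - x_b as the second row of a 2 x (J-1) table,
   and (a), (c) are the cases k = 1 and mu = (n-j, j).  For (b), the first
   column of a tableau strictly increases and the smallest symbols all lie in
   the first row. *)

From mathcomp Require Import all_boot all_order all_algebra.
From mathcomp Require Import zify ring.
Import GRing.Theory Num.Theory.
Set Implicit Arguments. Unset Strict Implicit. Unset Printing Implicit Defensive.

Lemma sorted_geq_nth_le_head (s : seq nat) i : sorted geq s -> nth 0 s i <= head 0 s.
Proof.
case: s => [|x s] s_sorted; first by rewrite nth_nil.
have [i_small|] := ltnP i (size s).+1; last by move=> ?; rewrite nth_default.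
have geq_trans : transitive geq by move=> a b c /= ba cb; apply: leq_trans ba.
exact: (sorted_leq_nth geq_trans leqnn 0 s_sorted (0 : nat) i).
Qed.

Section Cells.

Variable rho : seq nat.

Definition cell_row (c : cell rho) : nat := (val c).1.
Definition cell_col (c : cell rho) : nat := (val c).2.

Lemma cell_col_lt (c : cell rho) : cell_col c < nth 0 rho (cell_row c).
Proof. exact: valP c. Qed.

Lemma cell_row_lt (c : cell rho) : cell_row c < size rho.
Proof. exact: ltn_ord. Qed.

Lemma cell_col_lt_head (c : cell rho) : cell_col c < head 0 rho.
Proof. exact: ltn_ord. Qed.

Lemma cell_inj (c c' : cell rho) :
  cell_row c = cell_row c' -> cell_col c = cell_col c' -> c = c'.
Proof.
move: c c' => [[i j] ?] [[i' j'] ?]; rewrite /cell_row /cell_col /= => ii' jj'.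
by apply: val_inj; congr pair; apply: val_inj.
Qed.

Lemma cell_exists i j :
  i < size rho -> j < nth 0 rho i -> j < head 0 rho ->
  exists c : cell rho, cell_row c = i /\ cell_col c = j.
Proof.
move=> lt_i lt_j_row lt_j_head.
by exists (exist _ (Ordinal lt_i, Ordinal lt_j_head) lt_j_row).
Qed.

Lemma card_row_prefix i q :
  i < size rho -> q <= nth 0 rho i -> q <= head 0 rho ->
  #|[set c : cell rho | (cell_row c == i) && (cell_col c < q)]| = q.
Proof.
move=> lt_i le_q_row le_q_head.
pose g (j : 'I_q) : cell rho :=
  exist _ (Ordinal lt_i, widen_ord le_q_head j) (leq_trans (ltn_ord j) le_q_row).
have g_inj : injective g by move=> j j' /(congr1 cell_col) jj'; apply: val_inj.
rewrite -[RHS]card_ord -(card_imset _ g_inj); apply: eq_card => c.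
rewrite !inE; apply/andP/imsetP => [[/eqP row_c col_c]|[j _ ->]].
  by exists (Ordinal col_c) => //; apply: cell_inj.
by split=> //; apply: (ltn_ord j).
Qed.

Lemma card_row i :
  i < size rho -> nth 0 rho i <= head 0 rho ->
  #|[set c : cell rho | cell_row c == i]| = nth 0 rho i.
Proof.
move=> lt_i le_head; rewrite -[RHS](card_row_prefix lt_i (leqnn _) le_head).
by apply: eq_card => c; rewrite !inE; case: eqP => // <-; rewrite cell_col_lt.
Qed.

End Cells.

Section RowMultiplicities.

Variables (rho : seq nat) (s : nat).
Implicit Type f : {ffun cell rho -> 'I_s}.

Definition row_mult f (i b : nat) : nat :=
  #|[set c | (cell_row c == i) && (f c == b :> nat)]|.

Definition row_mult_le f (i a : nat) : nat :=
  #|[set c | (cell_row c == i) && (f c <= a)]|.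

Lemma row_mult_leE f i a : row_mult_le f i a = \sum_(0 <= b < a.+1) row_mult f i b.
Proof.
elim: a => [|a IHa].
  by rewrite big_nat1; apply: eq_card => c; rewrite !inE leqn0.
rewrite big_nat_recr //= -IHa /row_mult_le -(cardsID [set c | f c <= a]).
congr (_ + _); apply: eq_card => c; rewrite !inE.
  rewrite -andbA; case: (cell_row c == i) => //=.
  by apply/andP/idP => [[]//|le_a]; rewrite le_a leqW.
rewrite -ltnNge andbCA; case: (cell_row c == i) => //=.
by rewrite eq_sym eqn_leq.
Qed.

Lemma sum_row_mult f i :
  \sum_(b < s) row_mult f i b = #|[set c : cell rho | cell_row c == i]|.
Proof.
rewrite -sum1_card (partition_big f xpredT) //=; apply: eq_bigr => b _.
by rewrite sum1dep_card; apply: eq_card => c; rewrite !inE.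
Qed.

Lemma content_row_mult f (b : 'I_s) :
  #|[set c | f c == b]| = \sum_(i < size rho) row_mult f i b.
Proof.
rewrite -sum1_card (partition_big (fun c : cell rho => (val c).1) xpredT) //=.
apply: eq_bigr => i _; rewrite sum1dep_card; apply: eq_card => c.
by rewrite !inE andbC.
Qed.

Lemma row_mult_le_card_row f i b : row_mult f i b <= #|[set c : cell rho | cell_row c == i]|.
Proof. by apply: subset_leq_card; apply/subsetP => c; rewrite !inE => /andP[]. Qed.

Lemma row_mult_le_content f i (b : 'I_s) : row_mult f i b <= #|[set c | f c == b]|.
Proof. by apply: subset_leq_card; apply/subsetP => c; rewrite !inE => /andP[]. Qed.

Lemma row_mult_symbol_out f i b : s <= b -> row_mult f i b = 0.
Proof.
move=> le_b; apply: eq_card0 => c; rewrite !inE.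
by apply/negP => /andP[_ /eqP fc]; have := ltn_ord (f c); rewrite fc ltnNge le_b.
Qed.

End RowMultiplicities.

Section SemistandardTableaux.

Variables rho lam : seq nat.
Implicit Types f g : {ffun cell rho -> 'I_(size lam)}.

Lemma ssyt_row f c c' : is_ssyt f ->
  cell_row c = cell_row c' -> cell_col c <= cell_col c' -> f c <= f c'.
Proof.
case/and3P => /forallP /(_ c) /forallP /(_ c') /implyP rows _ _ ? ?.
by apply: rows; rewrite andbC; apply/andP; split=> //; apply/eqP/val_inj.
Qed.

Lemma ssyt_col f c c' : is_ssyt f ->
  cell_col c = cell_col c' -> cell_row c < cell_row c' -> f c < f c'.
Proof.
case/and3P => _ /forallP /(_ c) /forallP /(_ c') /implyP cols _ ? ?.
by apply: cols; rewrite andbC; apply/andP; split=> //; apply/eqP/val_inj.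
Qed.

Lemma ssyt_content f (a : 'I_(size lam)) : is_ssyt f ->
  #|[set c | f c == a]| = nth 0 lam a.
Proof. by case/and3P => _ _ /forallP /(_ a) /eqP. Qed.

Lemma ssytP f :
  (forall c c', cell_row c = cell_row c' -> cell_col c <= cell_col c' -> f c <= f c') ->
  (forall c c', cell_col c = cell_col c' -> cell_row c < cell_row c' -> f c < f c') ->
  (forall a : 'I_(size lam), #|[set c | f c == a]| = nth 0 lam a) ->
  is_ssyt f.
Proof.
move=> rows cols content; apply/and3P; split; apply/forallP => c.
- by apply/forallP => c' /=; apply/implyP => /andP[/eqP/(congr1 val) ? ?]; apply: rows.
- by apply/forallP => c' /=; apply/implyP => /andP[/eqP/(congr1 val) ? ?]; apply: cols.
- exact/eqP/content.
Qed.

(* Rows weakly increase, so the entries [<= a] of a row fill its first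
   [row_mult_le f i a] cells. *)
Lemma ssyt_leE f c a : is_ssyt f ->
  (f c <= a) = (cell_col c < row_mult_le f (cell_row c) a).
Proof.
move=> f_ssyt; have lt_row := cell_row_lt c.
apply/idP/idP => [le_a|].
  rewrite -{1}(card_row_prefix lt_row (cell_col_lt c) (cell_col_lt_head c)).
  apply: subset_leq_card; apply/subsetP => c'; rewrite !inE => /andP[/eqP row_c' lt_col].
  by rewrite row_c' eqxx (leq_trans _ le_a) // (ssyt_row f_ssyt) // ltnW.
apply: contraTT; rewrite -!ltnNge ltnS => lt_a.
rewrite -(card_row_prefix lt_row (ltnW (cell_col_lt c)) (ltnW (cell_col_lt_head c))).
apply: subset_leq_card; apply/subsetP => c'; rewrite !inE => /andP[/eqP row_c' le_a].
rewrite row_c' eqxx ltnNge; apply: contraL lt_a => /(ssyt_row f_ssyt (esym row_c')).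
by rewrite -leqNgt => /leq_trans; apply.
Qed.

Lemma ssyt_eq f g : is_ssyt f -> is_ssyt g ->
  (forall i b, i < size rho -> b < size lam -> row_mult f i b = row_mult g i b) ->
  f = g.
Proof.
move=> f_ssyt g_ssyt eq_mult.
have eq_mult_le (c : cell rho) a : row_mult_le f (cell_row c) a = row_mult_le g (cell_row c) a.
  rewrite !row_mult_leE; apply: eq_big_nat => b _.
  have [lt_b|le_b] := ltnP b (size lam); first exact: eq_mult _ _ (cell_row_lt c) lt_b.
  by rewrite !row_mult_symbol_out.
apply/ffunP => c; apply/val_inj/eqP; rewrite eqn_leq; apply/andP; split.
  by rewrite (ssyt_leE _ _ f_ssyt) eq_mult_le -(ssyt_leE _ _ g_ssyt).
by rewrite (ssyt_leE _ _ g_ssyt) -eq_mult_le -(ssyt_leE _ _ f_ssyt).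
Qed.

Lemma ssyt_zero_row0 f c : sorted geq rho -> is_ssyt f ->
  f c = 0 :> nat -> cell_row c = 0.
Proof.
move=> rho_sorted f_ssyt fc0; case row_c: (cell_row c) => [//|i].
have size_gt0 : 0 < size rho by apply: leq_ltn_trans (leq0n _) (cell_row_lt c).
have lt_col : cell_col c < nth 0 rho 0.
  by rewrite nth0; apply: leq_trans (cell_col_lt c) (sorted_geq_nth_le_head _ rho_sorted).
have [c0 [row_c0 col_c0]] := cell_exists size_gt0 lt_col (cell_col_lt_head c).
by have := ssyt_col f_ssyt col_c0; rewrite row_c0 row_c fc0 ltn0 => /(_ isT).
Qed.

Lemma ssyt_size_le f : all (fun x => 0 < x) rho -> is_ssyt f -> size rho <= size lam.
Proof.
move=> /(all_nthP 0) rho_pos f_ssyt; have [->//|size_gt0] := posnP (size rho).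
have head_gt0 : 0 < head 0 rho by rewrite -nth0 rho_pos.
pose c0 (i : 'I_(size rho)) : cell rho :=
  exist _ (i, Ordinal head_gt0) (rho_pos i (ltn_ord i)).
have f_c0_inj : injective (f \o c0).
  move=> i j /= fij; apply/val_inj/eqP; case: ltngtP => // lt_ij.
    by have := ssyt_col (c := c0 i) (c' := c0 j) f_ssyt erefl lt_ij; rewrite fij ltnn.
  by have := ssyt_col (c := c0 j) (c' := c0 i) f_ssyt erefl lt_ij; rewrite fij ltnn.
by rewrite -(card_ord (size rho)) -(card_ord (size lam)) (leq_card _ f_c0_inj).
Qed.

(* All entries equal to the smallest symbol lie in the first row. *)
Lemma ssyt_head_le f : sorted geq rho -> is_ssyt f -> head 0 lam <= head 0 rho.
Proof.
move=> rho_sorted f_ssyt; have [/size0nil->//|lam_gt0] := posnP (size lam).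
rewrite -nth0 -[nth 0 lam 0]/(nth 0 lam (Ordinal lam_gt0)) -(ssyt_content _ f_ssyt).
have [rho_nil|rho_gt0] := posnP (size rho).
  suff -> : [set c | f c == Ordinal lam_gt0] = set0 by rewrite cards0.
  by apply/setP => c; have := leq_trans (cell_row_lt c) (eq_leq rho_nil).
have row0_le_head := sorted_geq_nth_le_head 0 rho_sorted.
apply: (@leq_trans #|[set c : cell rho | cell_row c == 0]|).
  apply: subset_leq_card; apply/subsetP => c; rewrite !inE => /eqP fc0.
  by rewrite (ssyt_zero_row0 rho_sorted f_ssyt) ?fc0.
by rewrite card_row.
Qed.

Lemma kostka_gt0_size : all (fun x => 0 < x) rho -> 0 < kostka rho lam ->
  size rho <= size lam.
Proof. by move=> rho_pos /card_gt0P[f]; rewrite inE; apply: ssyt_size_le. Qed.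

Lemma kostka_gt0_head : sorted geq rho -> 0 < kostka rho lam ->
  head 0 lam <= head 0 rho.
Proof. by move=> rho_sorted /card_gt0P[f]; rewrite inE; apply: ssyt_head_le. Qed.

End SemistandardTableaux.

Lemma leq_partial_sum (F : nat -> nat) a a' : a <= a' ->
  \sum_(0 <= b < a) F b <= \sum_(0 <= b < a') F b.
Proof. by move=> le_a; rewrite (big_cat_nat (leq0n a) le_a) leq_addr. Qed.

Lemma eq_from_partial_sums (F G : nat -> nat) m :
  (forall a, a <= m -> \sum_(0 <= b < a.+1) F b = \sum_(0 <= b < a.+1) G b) ->
  forall b, b <= m -> F b = G b.
Proof.
move=> eq_sums [|b] le_b; first by have := eq_sums 0 le_b; rewrite !big_nat1.
have := eq_sums b.+1 le_b; rewrite !(big_nat_recr b.+1) //= eq_sums ?(ltnW le_b) //.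
exact: addnI.
Qed.

Section RowFilling.

Variables (rho : seq nat) (m : nat) (Y : nat -> nat -> nat).
Hypothesis rho_sorted : sorted geq rho.
Hypothesis Y_rows : forall i, i < size rho -> \sum_(0 <= b < m.+1) Y i b = nth 0 rho i.

(* Row [i] is filled with [Y i 0] zeros, then [Y i 1] ones, and so on. *)
Definition row_filling : {ffun cell rho -> 'I_m.+1} :=
  [ffun c => inord (find (fun a => cell_col c < \sum_(0 <= b < a.+1) Y (cell_row c) b)
                         (iota 0 m.+1))].

Lemma row_filling_le c a : a <= m ->
  (row_filling c <= a) = (cell_col c < \sum_(0 <= b < a.+1) Y (cell_row c) b).
Proof.
move=> le_a; pose p a := cell_col c < \sum_(0 <= b < a.+1) Y (cell_row c) b.
have has_p : has p (iota 0 m.+1).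
  apply/hasP; exists m; first by rewrite mem_iota add0n ltnSn.
  by rewrite /p /= Y_rows ?cell_col_lt ?cell_row_lt.
have lt_find : find p (iota 0 m.+1) < m.+1 by have := has_p; rewrite has_find size_iota.
rewrite ffunE -/p inordK //; apply/idP/idP => [le_find|p_a].
  have := nth_find 0 has_p; rewrite nth_iota // add0n.
  by move/leq_trans; apply; apply: leq_partial_sum.
rewrite leqNgt; apply: contraL p_a => lt_a.
by have := before_find 0 lt_a; rewrite nth_iota ?(ltn_trans lt_a) // add0n => /negbT.
Qed.

Lemma row_filling_row c c' :
  cell_row c = cell_row c' -> cell_col c <= cell_col c' -> row_filling c <= row_filling c'.
Proof.
move=> eq_row le_col; have le_m (d : cell rho) : row_filling d <= m by rewrite -ltnS.
rewrite row_filling_le // eq_row; apply: leq_ltn_trans le_col _.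
by rewrite -row_filling_le.
Qed.

Lemma row_filling_row_mult i b : i < size rho -> b <= m ->
  row_mult row_filling i b = Y i b.
Proof.
move=> lt_i; apply: eq_from_partial_sums => a le_a.
have le_row : \sum_(0 <= b < a.+1) Y i b <= nth 0 rho i.
  by rewrite -Y_rows //; apply: leq_partial_sum.
rewrite -row_mult_leE -[RHS](card_row_prefix lt_i le_row); last first.
  exact: leq_trans le_row (sorted_geq_nth_le_head _ rho_sorted).
apply: eq_card => c; rewrite !inE row_filling_le //.
by case: eqP => // ->.
Qed.

End RowFilling.

Section TwoRowTableaux.

Variables (n k m0 : nat) (mu' : seq nat).
Local Notation mu := (m0 :: mu').
Local Notation rho := [:: n - k; k].
Local Notation tableau := {ffun cell rho -> 'I_(size mu)}.

Hypothesis mu_sum : sumn mu = n.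
Hypothesis k_le_half : k <= n - k.
Hypothesis k_le_m0 : k <= m0.

Lemma two_row_sorted : sorted geq rho.
Proof. by rewrite /= andbT. Qed.

Lemma card_two_row i : i < 2 -> #|[set c : cell rho | cell_row c == i]| = nth 0 rho i.
Proof. by move=> lt_i; rewrite card_row // sorted_geq_nth_le_head ?two_row_sorted. Qed.

Lemma two_row_mult0 (f : tableau) : is_ssyt f -> row_mult f 1 0 = 0.
Proof.
move=> f_ssyt; apply: eq_card0 => c; rewrite !inE; apply/andP => -[/eqP row_c /eqP fc0].
by rewrite (ssyt_zero_row0 two_row_sorted f_ssyt fc0) in row_c.
Qed.

Lemma two_row_mult1_le (f : tableau) b : row_mult f 1 b <= k.
Proof. by apply: leq_trans (row_mult_le_card_row f 1 b) _; rewrite card_two_row. Qed.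

Lemma two_row_content (f : tableau) b : is_ssyt f -> b < size mu ->
  row_mult f 0 b + row_mult f 1 b = nth 0 mu b.
Proof.
move=> f_ssyt lt_b; rewrite -[b]/(nat_of_ord (Ordinal lt_b)) -(ssyt_content _ f_ssyt).
by rewrite content_row_mult big_ord_recl big_ord1.
Qed.

Lemma two_row_ssyt_exists (y : nat -> nat) :
  y 0 = 0 -> \sum_(0 <= b < size mu) y b = k -> (forall b, y b <= nth 0 mu b) ->
  exists2 f : tableau, is_ssyt f & forall b, b < size mu -> row_mult f 1 b = y b.
Proof.
move=> y0 sum_y le_y.
pose Y i b := if i is 0 then nth 0 mu b - y b else y b.
have Y_rows i : i < size rho -> \sum_(0 <= b < (size mu').+1) Y i b = nth 0 rho i.
  have sum_mu : \sum_(0 <= b < size mu) nth 0 mu b = n.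
    by rewrite -mu_sum sumnE [RHS](big_nth 0).
  case: i => [|[|//]] _ //=; rewrite -sum_mu -sum_y.
  by rewrite -(eq_big_nat _ _ (fun b _ => subnK (le_y b))) big_split addnK.
pose f : tableau := @row_filling rho (size mu') Y.
have f_le := row_filling_le Y_rows.
have f_mult i b : i < 2 -> b < size mu -> row_mult f i b = Y i b.
  by move=> lt_i lt_b; have := row_filling_row_mult two_row_sorted Y_rows lt_i lt_b.
exists f => [|b]; last exact: f_mult.
apply: ssytP => [c c'|c c' eq_col lt_row|a].
- exact: row_filling_row.
- have [row_c row_c'] : cell_row c = 0 /\ cell_row c' = 1.
    by have /= := cell_row_lt c'; lia.
  have fc0 : f c <= 0.
    rewrite f_le // row_c big_nat1 /= y0 subn0 eq_col; apply: leq_trans k_le_m0.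
    by have := cell_col_lt c'; rewrite row_c'.
  have fc'_gt0 : 0 < f c' by rewrite lt0n -leqn0 f_le // row_c' big_nat1 /= y0.
  exact: leq_ltn_trans fc0 fc'_gt0.
- by rewrite content_row_mult big_ord_recl big_ord1 !f_mult //= subnK.
Qed.

Definition second_row_mult (f : tableau) : {ffun 'I_(size mu') -> 'I_k.+1} :=
  [ffun j : 'I_(size mu') => inord (row_mult f 1 j.+1)].

Lemma second_row_multE f (j : 'I_(size mu')) : second_row_mult f j = row_mult f 1 j.+1 :> nat.
Proof. by rewrite ffunE inordK // ltnS two_row_mult1_le. Qed.

Lemma second_row_mult_inj :
  {in [set f : tableau | is_ssyt f] &, injective second_row_mult}.
Proof.
move=> f g; rewrite !inE => f_ssyt g_ssyt eq_fg.
have eq_row1 b : b < size mu -> row_mult f 1 b = row_mult g 1 b.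
  case: b => [|j] lt_j; first by rewrite !two_row_mult0.
  by rewrite -[j]/(nat_of_ord (@Ordinal (size mu') j lt_j)) -!second_row_multE eq_fg.
apply: ssyt_eq => // -[|[|//]] b _ lt_b; last exact: eq_row1.
by apply/eqP; rewrite -(eqn_add2r (row_mult f 1 b)) {2}eq_row1 // !two_row_content.
Qed.

Lemma second_row_mult_bounded_comp f : is_ssyt f ->
  (\sum_(j < size mu') (second_row_mult f j : nat) == k)
  && [forall j, (second_row_mult f j : nat) <= nth 0 mu j.+1].
Proof.
move=> f_ssyt; apply/andP; split.
  apply/eqP; transitivity (\sum_(b < size mu) row_mult f 1 b).
    rewrite big_ord_recl two_row_mult0 // add0n.
    by apply: eq_bigr => j _; rewrite second_row_multE lift0.
  by rewrite sum_row_mult card_two_row.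
apply/forallP => j; rewrite second_row_multE.
have lt_j : j.+1 < size mu by exact: ltn_ord j.
by rewrite -[j.+1]/(nat_of_ord (Ordinal lt_j)) -(ssyt_content _ f_ssyt) row_mult_le_content.
Qed.

Lemma kostka_two_row : kostka rho mu = num_bounded_comps (size mu') k (fun j => nth 0 mu j.+1).
Proof.
rewrite /kostka /num_bounded_comps -(card_in_imset second_row_mult_inj).
apply: eq_card => x; rewrite inE; apply/imsetP/idP => [[f]|].
  by rewrite inE => f_ssyt ->; apply: second_row_mult_bounded_comp.
case/andP => /eqP sum_x /forallP le_x.
pose y b := if b is j.+1 then oapp (fun j' => x j' : nat) 0 (insub j) else 0.
have sum_y : \sum_(0 <= b < size mu) y b = k.
  rewrite big_nat_recl // add0n big_mkord -sum_x.
  by apply: eq_bigr => j _; rewrite /y valK.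
have le_y b : y b <= nth 0 mu b.
  by case: b => [|j] //=; case: insubP => [j' _ <-|] //=; apply: le_x.
have [f f_ssyt f_y] := two_row_ssyt_exists erefl sum_y le_y.
exists f; first by rewrite inE.
apply/ffunP => j; apply: val_inj => /=.
by rewrite second_row_multE f_y /= ?valK //; apply: ltn_ord.
Qed.

End TwoRowTableaux.

Lemma leq_sum_term (I : finType) (F : I -> nat) i : F i <= \sum_j F j.
Proof. by rewrite (bigD1 i) //= leq_addr. Qed.

Lemma ord2_cases (i : 'I_2) : i = ord0 \/ i = ord_max.
Proof.
by case: i => -[|[|//]] lt_i; [left | right]; apply: val_inj.
Qed.

Section TwoRowTables.

Variables (k : nat) (s : seq nat).
Local Notation a := [:: k; sumn s - k].
Local Notation table := {ffun 'I_(size a) * 'I_(size s) -> 'I_(sumn a).+1}.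
Local Notation comp := {ffun 'I_(size s) -> 'I_k.+1}.

Definition tables := [set M : table |
  [forall i, \sum_(j < size s) (M (i, j) : nat) == nth 0 a i]
  && [forall j, \sum_(i < size a) (M (i, j) : nat) == nth 0 s j]].

Definition bounded_comps := [set x : comp |
  (\sum_(j < size s) (x j : nat) == k) && [forall j, (x j : nat) <= nth 0 s j]].

Lemma sum_nth : \sum_(j < size s) nth 0 s j = sumn s.
Proof. by rewrite sumnE (big_nth 0) big_mkord. Qed.

Lemma tablesP (M : table) : M \in tables ->
  \sum_(j < size s) (M (ord0, j) : nat) = k
  /\ forall j, (M (ord0, j) : nat) + M (ord_max, j) = nth 0 s j.
Proof.
rewrite inE => /andP[/forallP rows /forallP cols]; split; first exact/eqP/(rows ord0).
move=> j; have /eqP := cols j; rewrite big_ord_recl big_ord1.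
by have -> : lift ord0 ord0 = ord_max :> 'I_2 by apply: val_inj.
Qed.

Definition table_first_row (M : table) : comp := [ffun j => inord (M (ord0, j))].

Lemma table_first_rowE M j : M \in tables -> table_first_row M j = M (ord0, j) :> nat.
Proof.
case/tablesP => sum0 _; rewrite ffunE inordK // ltnS.
by have := leq_sum_term (fun j => M (ord0, j) : nat) j; rewrite sum0.
Qed.

Lemma table_first_row_inj : {in tables &, injective table_first_row}.
Proof.
move=> M M' M_tab M'_tab eq_row0; apply/ffunP => -[i j]; apply: val_inj.
have eq0 : M (ord0, j) = M' (ord0, j) :> nat.
  by rewrite -!table_first_rowE // eq_row0.
case: (ord2_cases i) => ->{i} //=; apply: (@addnI (M (ord0, j))).
by rewrite (proj2 (tablesP M_tab)) eq0 (proj2 (tablesP M'_tab)).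
Qed.

Lemma table_first_row_bounded M : M \in tables -> table_first_row M \in bounded_comps.
Proof.
move=> M_tab; have [sum0 col_sums] := tablesP M_tab.
rewrite inE; apply/andP; split.
  apply/eqP; rewrite -[RHS]sum0.
  by apply: eq_bigr => j _; rewrite table_first_rowE.
by apply/forallP => j; rewrite table_first_rowE // -col_sums leq_addr.
Qed.

Definition comp_table (x : comp) : table :=
  [ffun ij => inord (if ij.1 == ord0 then x ij.2 : nat else nth 0 s ij.2 - x ij.2)].

Lemma comp_tableE x : x \in bounded_comps ->
  (forall j, comp_table x (ord0, j) = x j :> nat)
  /\ (forall j, comp_table x (ord_max, j) = nth 0 s j - x j :> nat)
  /\ \sum_(j < size s) (nth 0 s j - x j) = sumn s - k.
Proof.
rewrite inE => /andP[/eqP sum_x /forallP le_x].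
have sum_rest : \sum_(j < size s) (nth 0 s j - x j) = sumn s - k.
  rewrite -sum_nth -(eq_bigr _ (fun j _ => subnK (le_x j))) big_split /= sum_x.
  by rewrite addnK.
split; [|split] => // j; rewrite ffunE inordK //= ltnS.
  exact: leq_trans (ltn_ord (x j)) (leq_addr _ _).
rewrite addn0 -sum_rest; apply: leq_trans (leq_addl k _).
exact: (leq_sum_term (fun j : 'I_(size s) => nth 0 s j - x j)).
Qed.

Lemma comp_table_tables x : x \in bounded_comps -> comp_table x \in tables.
Proof.
move=> x_comp; have [row0 [row1 sum_rest]] := comp_tableE x_comp.
move: x_comp; rewrite !inE => /andP[/eqP sum_x /forallP le_x].
apply/andP; split; apply/forallP.
  move=> i; apply/eqP; case: (ord2_cases i) => -> /=; [rewrite -[RHS]sum_x | rewrite -[RHS]sum_rest];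
    by apply: eq_bigr => j _; rewrite ?row0 ?row1.
move=> j; apply/eqP; rewrite big_ord_recl big_ord1.
have -> : lift ord0 ord0 = ord_max :> 'I_2 by apply: val_inj.
by rewrite row0 row1 subnKC.
Qed.

Lemma table_first_row_comp_table x : x \in bounded_comps ->
  table_first_row (comp_table x) = x.
Proof.
move=> x_comp; have [row0 _] := comp_tableE x_comp.
apply/ffunP => j; apply: val_inj => /=.
by rewrite table_first_rowE ?row0 ?comp_table_tables.
Qed.

Lemma num_bounded_comps_tables :
  num_bounded_comps (size s) k (nth 0 s) = num_tables a s.
Proof.
rewrite -[num_tables _ _]/#|tables| -(card_in_imset table_first_row_inj).
apply: eq_card => x; rewrite -[x \in _]/(x \in bounded_comps).
apply/idP/imsetP => [x_comp|[M M_tab ->]]; last exact: table_first_row_bounded.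
exists (comp_table x); first exact: comp_table_tables.
by rewrite table_first_row_comp_table.
Qed.

End TwoRowTables.

Lemma num_bounded_comps_one_part k (B : nat -> nat) :
  num_bounded_comps 1 k B = if B 0 < k then 0 else 1.
Proof.
rewrite /num_bounded_comps; case: ltnP => [lt_B|le_k].
  apply: eq_card0 => x; rewrite !inE big_ord1.
  by apply/andP => -[/eqP x0 /forallP/(_ ord0)]; rewrite x0 leqNgt lt_B.
rewrite -[RHS](cards1 ([ffun=> ord_max] : {ffun 'I_1 -> 'I_k.+1})); apply: eq_card => x; rewrite !inE big_ord1.
apply/andP/eqP => [[/eqP x0 _]|->].
  by apply/ffunP => i; rewrite ffunE (ord1 i); apply: val_inj.
by rewrite ffunE; split=> //; apply/forallP => i; rewrite ffunE (ord1 i).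
Qed.

Lemma num_bounded_comps_sum1 p (B : nat -> nat) :
  (forall j, j < p -> 0 < B j) -> num_bounded_comps p 1 B = p.
Proof.
move=> B_gt0; pose e (j : 'I_p) : {ffun 'I_p -> 'I_2} := [ffun i => inord (i == j)].
have eE j i : e j i = (i == j) :> nat by rewrite ffunE inordK //; case: (i == j).
have e_inj : injective e.
  by move=> j j' /(congr1 (fun x : {ffun 'I_p -> 'I_2} => x j : nat)); rewrite !eE eqxx; case: eqP.
rewrite -[RHS]card_ord -(card_imset _ e_inj); apply: eq_card => x; rewrite !inE.
apply/idP/imsetP => [/andP[/eqP sum_x _]|[j _ ->]]; last first.
  rewrite (bigD1 j) //= eE eqxx big1 => [|i /negPf]; last by rewrite eE => ->.
  by apply/forallP => i; rewrite eE; case: eqP => [->|]; rewrite ?B_gt0.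
have [j /eqP xj] : exists j, (x j : nat) == 1.
  apply/existsP; move: sum_x; apply: contraPT; rewrite negb_exists => /forallP x_ne1.
  rewrite big1 // => i _; have := x_ne1 i; have := ltn_ord (x i).
  by case: (x i : nat) => [|[]].
exists j => //; apply/ffunP => i; apply: val_inj; rewrite /= eE.
case: eqP => [->|/eqP ne_ij] //.
move: sum_x; rewrite (bigD1 j) //= xj => /succn_inj/eqP; rewrite sum_nat_eq0.
by move/forallP/(_ i); rewrite ne_ij => /eqP.
Qed.

Lemma beta_hook n : 2 <= n -> beta n [:: n - 1; 1] = (1 - 2%:R / n%:R)%R :> rat.
Proof.
move=> le2n; rewrite /beta !big_ord_recl big_ord0 /=.
rewrite (_ : 2 * 1 - 1 = 1) // (_ : 2 * (bump 0 0).+1 - 1 = 3) // natrB; last exact: ltnW.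
by field; rewrite pnatr_eq0 -lt0n (ltn_trans _ le2n).
Qed.

Lemma kostka_hook n lam : is_partition n lam -> 2 <= n ->
  kostka [:: n - 1; 1] lam = size lam - 1.
Proof.
case: lam => [|l lam] /and3P[_ /(all_nthP 0) lam_gt0 /eqP lam_sum] le2n.
  by rewrite -lam_sum in le2n.
rewrite kostka_two_row ?subn_gt0 ?(lam_gt0 0) //.
by rewrite subn1 num_bounded_comps_sum1 // => j lt_j; apply: lam_gt0.
Qed.

Lemma kostka_two_row_two_row n k j : is_partition n [:: n - j; j] -> 1 <= k <= n./2 ->
  kostka [:: n - k; k] [:: n - j; j] = if j < k then 0 else 1.
Proof.
case/and3P => /= /andP[le_j _] _ /eqP lam_sum /andP[k_gt0 le_k].
by rewrite kostka_two_row ?num_bounded_comps_one_part //; lia.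
Qed.

Theorem corollary3p1 (n : nat) (lam mu : seq nat) :
  is_partition n lam -> is_partition n mu ->
  (* (a) *)
  (2 <= n ->
     kostka [:: n - 1; 1] lam * kostka [:: n - 1; 1] mu
       = (size lam - 1) * (size mu - 1)
     /\ beta n [:: n - 1; 1] = (1 - 2%:R / n%:R)%R :> rat)
  /\
  (* (b) *)
  (forall rho : seq nat, is_partition n rho ->
     0 < kostka rho lam * kostka rho mu ->
     size rho <= minn (size lam) (size mu)
     /\ maxn (head 0 lam) (head 0 mu) <= head 0 rho)
  /\
  (* (c) *)
  (forall k j : nat, 1 <= k <= n./2 -> lam = [:: n - j; j] ->
     kostka [:: n - k; k] lam = if j < k then 0 else 1)
  /\
  (* (d) *)
  (forall k : nat, 1 <= k <= n./2 -> k <= head 0 mu ->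
     kostka [:: n - k; k] mu
       = num_bounded_comps (size mu - 1) k (fun j => nth 0 mu j.+1)
     /\ num_bounded_comps (size mu - 1) k (fun j => nth 0 mu j.+1)
       = num_tables [:: k; n - head 0 mu - k] (behead mu)).
Proof.
move=> lam_part mu_part; split; [|split; [|split]].
- by move=> le2n; rewrite !kostka_hook ?beta_hook.
- move=> rho /and3P[rho_sorted rho_gt0 _]; rewrite muln_gt0 => /andP[lam_gt0 mu_gt0].
  rewrite leq_min geq_max !kostka_gt0_size ?kostka_gt0_head //.
- by move=> k j k_range lam_eq; rewrite lam_eq kostka_two_row_two_row // -lam_eq.
move=> k /andP[k_gt0 le_k].
case: mu mu_part => [|m mu] /and3P[_ _ /eqP mu_sum] /= le_km; first by rewrite leqNgt k_gt0 in le_km.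
have -> : n - m - k = sumn mu - k by rewrite -mu_sum /= addKn.
rewrite subn1 kostka_two_row //; last by lia.
by have := num_bounded_comps_tables k mu.
Qed.
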